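(* Let $A,B$ be finite-dimensional systems, $\{|j\rangle\}_{j=0}^{|A|-1}$ an orthonormal basis of $A$, $U_0,\dots,U_{|A|-1}$ unitaries on $B$, and $\mathcal C_U(X)=C_UXC_U^\dagger$ with $C_U=\sum_j|j\rangle\langle j|_A\otimes U_j$, viewed as a bipartite channel $AB\to AB$. Then \[ S_\infty[A|B]_{\mathcal C_U}\ge-2\log|A|, \] with equality when the vectors $\{|U_j\rangle\!\rangle\}_j$ are mutually orthogonal, i.e., $\operatorname{tr}(U_i^\dagger U_j)=0$ for all $i\ne j$.
   Context: $\log$ base 2; $\mathrm{St}(X)$ density operators; $\mathrm{Ch}(X',X)$ quantum channels. $|U\rangle\!\rangle:=\sum_i(\mathbb 1\otimes U)|ii\rangle$ denotes vectorization. For a bipartite channel $\mathcal N$ from $A'B'$ to $AB$ (here $A'=A$, $B'=B$): $\mathcal R^{\mathbb 1}_{A'\to A}(X):=\operatorname{tr}(X)\mathbb 1_A$; $D_\infty(\rho\|\sigma):=\log\inf\{\lambda:\rho\le\lambda\sigma\}$; for a channel $\mathcal M$ and CP map $\mathcal M'$, $D_\infty[\mathcal M\|\mathcal M']:=\sup_{\rho\in\mathrm{St}(RX')}D_\infty((\mathrm{id}\otimes\mathcal M)(\rho)\|(\mathrm{id}\otimes\mathcal M')(\rho))$; conditional channel min-entropy $S_\infty[A|B]_{\mathcal N}:=-\inf_{\mathcal Q\in\mathrm{Ch}(B',B)}D_\infty[\mathcal N\|\mathcal R^{\mathbb 1}_{A'\to A}\otimes\mathcal Q]$. *)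

From HB Require Import structures.
From mathcomp Require Import all_boot all_algebra.
From mathcomp Require Import complex mxtens.
From mathcomp Require Import all_classical all_reals ereal exp.

Set Implicit Arguments.
Unset Strict Implicit.
Unset Printing Implicit Defensive.

Import GRing.Theory Num.Theory.
Local Open Scope ring_scope.
Local Open Scope complex_scope.
Local Open Scope classical_set_scope.

Section QDefs.
Variable R : realType.
Local Notation C := R[i].

Definition adj m n (A : 'M[C]_(m, n)) : 'M[C]_(n, m) := map_mx conjc A^T.

Definition psd n (A : 'M[C]_n) : Prop :=
  forall v : 'cV[C]_n, 0 <= (adj v *m A *m v) 0 0.

Definition loewner n (A B : 'M[C]_n) : Prop := psd (B - A).

Definition state n (rho : 'M[C]_n) : Prop := psd rho /\ \tr rho = 1.

Definition unitary n (U : 'M[C]_n) : Prop :=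
  U *m adj U = 1%:M /\ adj U *m U = 1%:M.

(* block (i,j) of a matrix on a bipartite space C^k (x) C^n
   (tensor ordering of mxtens: first factor is the major index) *)
Definition block k n (X : 'M[C]_(k * n)) (i j : 'I_k) : 'M[C]_n :=
  \matrix_(a, b) X (mxtens_index (i, a)) (mxtens_index (j, b)).

(* tensor product of linear maps:
   (M1 (x) M2)(sum_ij E_ij (x) X_ij) = sum_ij M1(E_ij) (x) M2(X_ij) *)
Definition maptens n1 m1 n2 m2 (M1 : 'M[C]_n1 -> 'M[C]_m1)
  (M2 : 'M[C]_n2 -> 'M[C]_m2) (X : 'M[C]_(n1 * n2)) : 'M[C]_(m1 * m2) :=
  \sum_(i < n1) \sum_(j < n1) (M1 (delta_mx i j) *t M2 (block X i j)).

Definition idmap k : 'M[C]_k -> 'M[C]_k := fun X => X.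

Definition linmap n m (M : 'M[C]_n -> 'M[C]_m) : Prop :=
  forall (a : C) (X Y : 'M[C]_n), M (a *: X + Y) = a *: M X + M Y.

Definition CPmap n m (M : 'M[C]_n -> 'M[C]_m) : Prop :=
  linmap M /\
  forall k (X : 'M[C]_(k * n)), psd X -> psd (maptens (@idmap k) M X).

Definition channel n m (M : 'M[C]_n -> 'M[C]_m) : Prop :=
  CPmap M /\ forall X : 'M[C]_n, \tr (M X) = \tr X.

Definition log2 (x : R) : R := ln x / ln 2.

Definition Dmax n (rho sigma : 'M[C]_n) : \bar R :=
  let S := [set l : R | loewner rho (l%:C *: sigma)] in
  if `[< S !=set0 >] then ((log2 (inf S))%:E)%E else (+oo)%E.

Definition Dmaxch n m (M M' : 'M[C]_n -> 'M[C]_m) : \bar R :=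
  ereal_sup [set d | exists k (rho : 'M[C]_(k * n)),
     state rho /\ d = Dmax (maptens (@idmap k) M rho) (maptens (@idmap k) M' rho)].

Definition Rone n m : 'M[C]_n -> 'M[C]_m := fun X => (\tr X)%:M.

Definition Sminch nA' nB' nA nB
  (N : 'M[C]_(nA' * nB') -> 'M[C]_(nA * nB)) : \bar R :=
  (- ereal_inf [set d | exists Q : 'M[C]_nB' -> 'M[C]_nB,
        channel Q /\ d = Dmaxch N (maptens (@Rone nA' nA) Q)])%E.

End QDefs.

(* Lower bound: take the twirling channel Q(Y) = |A|^-1 sum_l U_l Y U_l^dagger.
   Since C_U = sum_j |j><j| (x) U_j, the operator Cauchy-Schwarz inequality bounds
   conjugation by C_U by |A| sum_j (conjugation by |j><j| (x) U_j), and adding the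
   remaining Kraus operators |i><j| (x) U_l of |A| (R^1 (x) Q) gives
   id (x) C_U <= |A|^2 id (x) (R^1 (x) Q) on every positive input.
   Upper bound: for any channel Q with id (x) C_U <= l id (x) (R^1 (x) Q) on the
   maximally entangled state of AB (x) AB, evaluate both sides on (1 (x) C_U)|1>>.
   The left side gives |A||B|, the right side l (|A||B|)^-1 sum_j <<U_j|J_Q|U_j>>,
   where J_Q is the Choi matrix of Q; as the |U_j>> are orthogonal of squared norm
   |B| and tr J_Q = |B|, Bessel's inequality bounds this sum by |B|^2, so
   l >= |A|^2. *)

From HB Require Import structures.
From mathcomp Require Import all_boot all_algebra.
From mathcomp Require Import complex mxtens.
From mathcomp Require Import all_classical all_reals ereal exp.
Import order.Order.TTheory GRing.Theory Num.Theory.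
Local Open Scope ring_scope.

Set Implicit Arguments.
Unset Strict Implicit.
Unset Printing Implicit Defensive.

Section TensorProduct.
Variable K : comPzRingType.

Lemma big_mxtens_index (V : nmodType) m n (F : 'I_(m * n) -> V) :
  \sum_k F k = \sum_(i < m) \sum_(j < n) F (mxtens_index (i, j)).
Proof.
rewrite pair_big (reindex (@mxtens_index m n)) /=; first by apply: eq_bigr => -[].
by exists (@mxtens_unindex m n) => k _; rewrite ?mxtens_indexK ?mxtens_unindexK.
Qed.

Lemma sum_natr_eq_mul (I : finType) (i : I) (F : I -> K) :
  \sum_j (i == j)%:R * F j = F i.
Proof.
rewrite (bigD1 i) //= eqxx mul1r big1 ?addr0 // => j ji.
by rewrite eq_sym (negPf ji) mul0r.
Qed.

Lemma tensmxDr m n p q (A : 'M[K]_(m, n)) (B D : 'M[K]_(p, q)) :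
  A *t (B + D) = A *t B + A *t D.
Proof.
apply/matrixP=> i j.
case: (mxtens_indexP i)=> i0 i1; case: (mxtens_indexP j)=> j0 j1.
by rewrite !mxE !mxtens_indexK mulrDr.
Qed.

Lemma tensmxZl m n p q (a : K) (A : 'M[K]_(m, n)) (B : 'M[K]_(p, q)) :
  (a *: A) *t B = a *: (A *t B).
Proof.
apply/matrixP=> i j.
case: (mxtens_indexP i)=> i0 i1; case: (mxtens_indexP j)=> j0 j1.
by rewrite !mxE !mxtens_indexK mulrA.
Qed.

Lemma tensmxZr m n p q (a : K) (A : 'M[K]_(m, n)) (B : 'M[K]_(p, q)) :
  A *t (a *: B) = a *: (A *t B).
Proof.
apply/matrixP=> i j.
case: (mxtens_indexP i)=> i0 i1; case: (mxtens_indexP j)=> j0 j1.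
by rewrite !mxE !mxtens_indexK mulrCA.
Qed.

Lemma tensmx_suml m n p q (I : finType) (F : I -> 'M[K]_(m, n)) (B : 'M[K]_(p, q)) :
  (\sum_i F i) *t B = \sum_i (F i *t B).
Proof.
apply/matrixP=> i j.
case: (mxtens_indexP i)=> i0 i1; case: (mxtens_indexP j)=> j0 j1.
rewrite tensmxE !summxE mulr_suml; apply: eq_bigr=> k _.
by rewrite tensmxE.
Qed.

Lemma tensmx_sumr m n p q (I : finType) (A : 'M[K]_(m, n)) (F : I -> 'M[K]_(p, q)) :
  A *t (\sum_i F i) = \sum_i (A *t F i).
Proof.
apply/matrixP=> i j.
case: (mxtens_indexP i)=> i0 i1; case: (mxtens_indexP j)=> j0 j1.
rewrite tensmxE !summxE mulr_sumr; apply: eq_bigr=> k _.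
by rewrite tensmxE.
Qed.

Lemma tensmx11 m n : (1%:M : 'M[K]_m) *t (1%:M : 'M[K]_n) = 1%:M.
Proof.
apply/matrixP=> i j.
case: (mxtens_indexP i)=> i0 i1; case: (mxtens_indexP j)=> j0 j1.
rewrite tensmxE !mxE (inj_eq (can_inj (@mxtens_indexK m n))) xpair_eqE.
by case: (i0 == j0); case: (i1 == j1); rewrite ?mulr1 ?mulr0.
Qed.

Lemma tensmx_delta m n p q (i : 'I_m) (j : 'I_n) (k : 'I_p) (l : 'I_q) :
  (delta_mx i j : 'M[K]_(m, n)) *t (delta_mx k l : 'M[K]_(p, q)) =
  delta_mx (mxtens_index (i, k)) (mxtens_index (j, l)).
Proof.
apply/matrixP=> x y.
case: (mxtens_indexP x)=> x0 x1; case: (mxtens_indexP y)=> y0 y1.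
rewrite tensmxE !mxE !(inj_eq (can_inj (@mxtens_indexK _ _))) !xpair_eqE.
by case: (x0 == i); case: (y0 == j); case: (x1 == k); case: (y1 == l);
  rewrite ?mulr1 ?mulr0.
Qed.

Lemma mxtrace_tens m n (A : 'M[K]_m) (B : 'M[K]_n) :
  \tr (A *t B) = \tr A * \tr B.
Proof.
rewrite /mxtrace big_mxtens_index mulr_suml; apply: eq_bigr => i _.
by rewrite mulr_sumr; apply: eq_bigr => j _; rewrite tensmxE.
Qed.

Lemma mxtrace_delta n (i j : 'I_n) : \tr (delta_mx i j : 'M[K]_n) = (i == j)%:R.
Proof.
rewrite /mxtrace (bigD1 i) //= big1 ?addr0; first by rewrite mxE eqxx eq_sym.
by move=> k /negPf ne; rewrite mxE ne.
Qed.

End TensorProduct.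

Section Adjoint.
Variable R : realType.
Local Notation C := R[i].
Local Open Scope complex_scope.

Lemma adj_is_zmod_morphism m n : zmod_morphism (@adj R m n).
Proof. by move=> A B; rewrite /adj linearB map_mxB. Qed.

HB.instance Definition _ m n :=
  GRing.isZmodMorphism.Build _ _ (@adj R m n) (@adj_is_zmod_morphism m n).

Lemma adjE m n (A : 'M[C]_(m, n)) i j : adj A i j = (A j i)^*.
Proof. by rewrite !mxE. Qed.

Lemma adjK m n (A : 'M[C]_(m, n)) : adj (adj A) = A.
Proof. by apply/matrixP=> i j; rewrite !adjE conjcK. Qed.

Lemma adjZ m n (a : C) (A : 'M[C]_(m, n)) : adj (a *: A) = a^* *: adj A.
Proof. by apply/matrixP=> i j; rewrite !mxE rmorphM. Qed.

Lemma adjM m n p (A : 'M[C]_(m, n)) (B : 'M[C]_(n, p)) :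
  adj (A *m B) = adj B *m adj A.
Proof. by rewrite /adj trmx_mul map_mxM. Qed.

Lemma adj_tens m n p q (A : 'M[C]_(m, n)) (B : 'M[C]_(p, q)) :
  adj (A *t B) = adj A *t adj B.
Proof. by rewrite /adj trmx_tens map_mxT. Qed.

Lemma adj_scalar n (a : C) : adj (a%:M : 'M_n) = a^*%:M.
Proof. by rewrite /adj tr_scalar_mx map_scalar_mx. Qed.

Lemma adj1 n : adj (1%:M : 'M[C]_n) = 1%:M.
Proof. by rewrite adj_scalar rmorph1. Qed.

Lemma adj_delta m n (i : 'I_m) (j : 'I_n) :
  adj (delta_mx i j : 'M[C]_(m, n)) = delta_mx j i.
Proof. by apply/matrixP=> a b; rewrite adjE !mxE rmorph_nat andbC. Qed.

End Adjoint.

Section Operators.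
Variable R : realType.
Local Notation C := R[i].
Local Open Scope complex_scope.

Lemma block_tens k n (A : 'M[C]_k) (B : 'M[C]_n) i j :
  block (A *t B) i j = A i j *: B.
Proof. by apply/matrixP=> a b; rewrite !mxE !mxtens_indexK. Qed.

Lemma blockD k n (X Y : 'M[C]_(k * n)) i j :
  block (X + Y) i j = block X i j + block Y i j.
Proof. by apply/matrixP=> a b; rewrite !mxE. Qed.

Lemma blockZ k n (a : C) (X : 'M[C]_(k * n)) i j :
  block (a *: X) i j = a *: block X i j.
Proof. by apply/matrixP=> a' b; rewrite !mxE. Qed.

Lemma block_sum k n (I : finType) (F : I -> 'M[C]_(k * n)) i j :
  block (\sum_l F l) i j = \sum_l block (F l) i j.
Proof.
apply/matrixP=> a b; rewrite !mxE !summxE; apply: eq_bigr=> l _.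
by rewrite mxE.
Qed.

Lemma block_decomp k n (X : 'M[C]_(k * n)) :
  X = \sum_(i < k) \sum_(j < k) (delta_mx i j *t block X i j).
Proof.
apply/matrixP=> p q.
case: (mxtens_indexP p)=> i0 i1; case: (mxtens_indexP q)=> j0 j1.
rewrite summxE (bigD1 i0) //= summxE (bigD1 j0) //= tensmxE !mxE !eqxx mul1r.
rewrite [X in _ + X + _]big1 ?addr0; last first.
  by move=> j; rewrite eq_sym => /negPf ne; rewrite tensmxE mxE ne andbF mul0r.
rewrite big1 ?addr0 // => i; rewrite eq_sym => /negPf ne.
by rewrite summxE big1 // => j _; rewrite tensmxE mxE ne mul0r.
Qed.

Lemma block_sum_delta k n (F : 'I_k -> 'I_k -> 'M[C]_n) i j :
  block (\sum_(p < k) \sum_(q < k) (delta_mx p q *t F p q)) i j = F i j.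
Proof.
rewrite block_sum (bigD1 i) //= block_sum (bigD1 j) //= block_tens mxE !eqxx scale1r.
rewrite [X in _ + X + _]big1 ?addr0; last first.
  by move=> q; rewrite eq_sym => /negPf ne; rewrite block_tens mxE ne andbF scale0r.
rewrite big1 ?addr0 // => p; rewrite eq_sym => /negPf ne.
by rewrite block_sum big1 // => q _; rewrite block_tens mxE ne scale0r.
Qed.

Section TensorMaps.
Variables (n1 m1 n2 m2 : nat).

Lemma maptens_delta (M1 : 'M[C]_n1 -> 'M[C]_m1) (M2 : 'M[C]_n2 -> 'M[C]_m2)
    (F : 'I_n1 -> 'I_n1 -> 'M[C]_n2) :
  maptens M1 M2 (\sum_p \sum_q (delta_mx p q *t F p q)) =
  \sum_p \sum_q (M1 (delta_mx p q) *t M2 (F p q)).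
Proof.
by apply: eq_bigr => p _; apply: eq_bigr => q _; rewrite block_sum_delta.
Qed.

Lemma eq_maptens (M1 M1' : 'M[C]_n1 -> 'M[C]_m1) (M2 M2' : 'M[C]_n2 -> 'M[C]_m2) X :
  M1 =1 M1' -> M2 =1 M2' -> maptens M1 M2 X = maptens M1' M2' X.
Proof.
by move=> h1 h2; apply: eq_bigr => p _; apply: eq_bigr => q _; rewrite h1 h2.
Qed.

Lemma maptens_suml (I : finType) (F : I -> 'M[C]_n1 -> 'M[C]_m1)
    (M2 : 'M[C]_n2 -> 'M[C]_m2) X :
  maptens (fun Y => \sum_l F l Y) M2 X = \sum_l maptens (F l) M2 X.
Proof.
rewrite /maptens [RHS]exchange_big /=; apply: eq_bigr => p _.
rewrite [RHS]exchange_big /=; apply: eq_bigr => q _.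
by rewrite tensmx_suml.
Qed.

Lemma maptens_sumr (M1 : 'M[C]_n1 -> 'M[C]_m1) (I : finType)
    (F : I -> 'M[C]_n2 -> 'M[C]_m2) X :
  maptens M1 (fun Y => \sum_l F l Y) X = \sum_l maptens M1 (F l) X.
Proof.
rewrite /maptens [RHS]exchange_big /=; apply: eq_bigr => p _.
rewrite [RHS]exchange_big /=; apply: eq_bigr => q _.
by rewrite tensmx_sumr.
Qed.

Lemma maptens_scaler (M1 : 'M[C]_n1 -> 'M[C]_m1) (a : C)
    (M2 : 'M[C]_n2 -> 'M[C]_m2) X :
  maptens M1 (fun Y => a *: M2 Y) X = a *: maptens M1 M2 X.
Proof.
rewrite /maptens scaler_sumr; apply: eq_bigr => p _.
by rewrite scaler_sumr; apply: eq_bigr => q _; rewrite tensmxZr.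
Qed.

Lemma maptens_linear (M1 : 'M[C]_n1 -> 'M[C]_m1) (M2 : 'M[C]_n2 -> 'M[C]_m2) :
  linmap M2 -> linmap (maptens M1 M2).
Proof.
move=> lin a X Y; rewrite /maptens scaler_sumr -big_split; apply: eq_bigr => i _.
rewrite scaler_sumr -big_split; apply: eq_bigr => j _ /=.
by rewrite blockD blockZ lin tensmxDr tensmxZr.
Qed.

Lemma tensmx_conj (A : 'M[C]_(m1, n1)) (B : 'M[C]_(m2, n2)) X :
  (A *t B) *m X *m adj (A *t B) =
  maptens (fun Y => A *m Y *m adj A) (fun Y => B *m Y *m adj B) X.
Proof.
rewrite {1}(block_decomp X) mulmx_sumr mulmx_suml; apply: eq_bigr => p _.
rewrite mulmx_sumr mulmx_suml; apply: eq_bigr => q _.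
by rewrite adj_tens !tensmx_mul.
Qed.

End TensorMaps.

Lemma maptens_id_conj k n m (B : 'M[C]_(m, n)) (X : 'M[C]_(k * n)) :
  maptens (@idmap R k) (fun Y => B *m Y *m adj B) X =
  (1%:M *t B) *m X *m adj (1%:M *t B).
Proof.
by rewrite tensmx_conj; apply: eq_maptens => // Y; rewrite adj1 mul1mx mulmx1.
Qed.

Lemma linmap0 n m (M : 'M[C]_n -> 'M[C]_m) : linmap M -> M 0 = 0.
Proof.
move=> lin; have := lin 1 0 0; rewrite !scale1r addr0 => E.
by apply: (@addrI _ (M 0)); rewrite addr0 -E.
Qed.

Lemma linmapZ n m (M : 'M[C]_n -> 'M[C]_m) a X : linmap M -> M (a *: X) = a *: M X.
Proof. by move=> lin; have := lin a X 0; rewrite addr0 (linmap0 lin) addr0. Qed.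

Lemma linmap_sum n m (M : 'M[C]_n -> 'M[C]_m) (I : finType) (F : I -> 'M[C]_n) :
  linmap M -> M (\sum_i F i) = \sum_i M (F i).
Proof.
move=> lin; apply: (big_morph M) => [X Y|]; last exact: linmap0.
by have := lin 1 X Y; rewrite !scale1r.
Qed.

Lemma Rone_linear n m : linmap (@Rone R n m).
Proof. by move=> a X Y; rewrite /Rone raddfD /= mxtraceZ raddfD scale_scalar_mx. Qed.

Lemma maptens_tensmx n1 m1 n2 m2 (M1 : 'M[C]_n1 -> 'M[C]_m1)
    (M2 : 'M[C]_n2 -> 'M[C]_m2) (A : 'M[C]_n1) (B : 'M[C]_n2) :
  linmap M1 -> linmap M2 -> maptens M1 M2 (A *t B) = M1 A *t M2 B.
Proof.
move=> l1 l2; rewrite {2}(matrix_sum_delta A) (linmap_sum _ l1) tensmx_suml.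
apply: eq_bigr => p _; rewrite (linmap_sum _ l1) tensmx_suml.
apply: eq_bigr => q _.
by rewrite block_tens (linmapZ _ _ l2) (linmapZ _ _ l1) tensmxZl tensmxZr.
Qed.

Lemma conj_linear m n (B : 'M[C]_(m, n)) : linmap (fun X => B *m X *m adj B).
Proof. by move=> a X Y; rewrite mulmxDr mulmxDl -scalemxAr -scalemxAl. Qed.

Definition qform n (X : 'M[C]_n) (v : 'cV[C]_n) : C := (adj v *m X *m v) 0 0.

Lemma qformD n (X Y : 'M[C]_n) v : qform (X + Y) v = qform X v + qform Y v.
Proof. by rewrite /qform mulmxDr mulmxDl mxE. Qed.

Lemma qformB n (X Y : 'M[C]_n) v : qform (X - Y) v = qform X v - qform Y v.
Proof. by rewrite qformD /qform mulmxN mulNmx [X in _ + X = _]mxE. Qed.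

Lemma qformZ n (a : C) (X : 'M[C]_n) v : qform (a *: X) v = a * qform X v.
Proof. by rewrite /qform -scalemxAr -scalemxAl mxE. Qed.

Lemma qform_sum n (I : finType) (F : I -> 'M[C]_n) v :
  qform (\sum_i F i) v = \sum_i qform (F i) v.
Proof. by rewrite /qform mulmx_sumr mulmx_suml summxE. Qed.

Lemma qform_mulmx m n (X : 'M[C]_m) (B : 'M[C]_(m, n)) v :
  qform X (B *m v) = qform (adj B *m X *m B) v.
Proof. by rewrite /qform adjM !mulmxA. Qed.

Lemma psdD n (X Y : 'M[C]_n) : psd X -> psd Y -> psd (X + Y).
Proof. by move=> pX pY v; rewrite -/(qform _ v) qformD addr_ge0 ?pX ?pY. Qed.

Lemma psd_sum n (I : finType) (P : pred I) (F : I -> 'M[C]_n) :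
  (forall i, psd (F i)) -> psd (\sum_(i | P i) F i).
Proof.
move=> pF v; rewrite -/(qform _ v) /qform mulmx_sumr mulmx_suml summxE.
by apply: sumr_ge0 => i _; apply: pF.
Qed.

Lemma psdZ n (a : C) (X : 'M[C]_n) : 0 <= a -> psd X -> psd (a *: X).
Proof. by move=> a0 pX v; rewrite -/(qform _ v) qformZ mulr_ge0 ?pX. Qed.

Lemma psd_conj m n (B : 'M[C]_(m, n)) (X : 'M[C]_n) :
  psd X -> psd (B *m X *m adj B).
Proof.
by move=> pX v; have := pX (adj B *m v); rewrite -/(qform X _) qform_mulmx adjK.
Qed.

Lemma psd_outer n (u : 'cV[C]_n) : psd (u *m adj u).
Proof.
move=> v; rewrite !mulmxA -(mulmxA (adj v *m u)) -[adj u *m v]adjK adjM adjK.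
by rewrite mxE big_ord1 adjE mulcJ_ge0.
Qed.

Lemma mxtrace_qform n (X : 'M[C]_n) : \tr X = \sum_i qform X (delta_mx i 0).
Proof.
by apply: eq_bigr => i _; rewrite /qform adj_delta -rowE -colE !mxE.
Qed.

Lemma psd_mxtrace_ge0 n (X : 'M[C]_n) : psd X -> 0 <= \tr X.
Proof. by move=> pX; rewrite mxtrace_qform sumr_ge0 // => i _; apply: pX. Qed.

Lemma loewner_qform n (A B : 'M[C]_n) v : loewner A B -> qform A v <= qform B v.
Proof. by move=> h; rewrite -subr_ge0 -qformB; apply: h. Qed.

Lemma loewner_trans n (A B D : 'M[C]_n) :
  loewner A B -> loewner B D -> loewner A D.
Proof. by move=> h1 h2; rewrite /loewner -(subrKA B); apply: psdD. Qed.

Lemma loewnerZ n (a : C) (A B : 'M[C]_n) :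
  0 <= a -> loewner A B -> loewner (a *: A) (a *: B).
Proof. by move=> a0 h; rewrite /loewner -scalerBr; apply: psdZ. Qed.

Lemma loewner_sum n (I : finType) (F G : I -> 'M[C]_n) :
  (forall i, loewner (F i) (G i)) -> loewner (\sum_i F i) (\sum_i G i).
Proof. by move=> h; rewrite /loewner -sumrB; apply: psd_sum. Qed.

Lemma loewner_bigD1 n (I : finType) (F : I -> 'M[C]_n) k :
  (forall i, psd (F i)) -> loewner (F k) (\sum_i F i).
Proof.
by move=> pF; rewrite /loewner (bigD1 k) //= addrC addrK; apply: psd_sum.
Qed.

End Operators.

Section ControlledUnitary.
Variable R : realType.
Local Notation C := R[i].

Lemma unitary_col_inner n (V : 'M[C]_n) i j : unitary V ->
  adj (col i V) *m col j V = (i == j)%:R%:M.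
Proof.
case=> _ h; apply/matrixP=> x y; rewrite [x]ord1 [y]ord1 !mxE eqxx mulr1n.
have := congr1 (fun M : 'M[C]_n => M i j) h; rewrite !mxE => <-.
by apply: eq_bigr => t _; rewrite !mxE.
Qed.

Lemma unitary_sum_col_outer n (V : 'M[C]_n) : unitary V ->
  \sum_i col i V *m adj (col i V) = 1%:M.
Proof.
case=> h _; rewrite -h; apply/matrixP=> x y; rewrite summxE mxE.
by apply: eq_bigr => i _; rewrite !mxE big_ord1 !mxE.
Qed.

Lemma unitary_col_outer_mul n (V : 'M[C]_n) i j : unitary V ->
  (col i V *m adj (col i V)) *m (col j V *m adj (col j V)) =
  (i == j)%:R *: (col i V *m adj (col j V)).
Proof.
move=> uV; rewrite mulmxA -(mulmxA (col i V)) unitary_col_inner //.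
by rewrite mul_mx_scalar -scalemxAl.
Qed.

Lemma unitary_col_outer_mxtrace n (V : 'M[C]_n) j : unitary V ->
  \tr (col j V *m adj (col j V)) = 1.
Proof. by move=> uV; rewrite mxtrace_mulC unitary_col_inner // eqxx mxtrace1. Qed.

Lemma qform_mxtrace n (X : 'M[C]_n) w : qform X w = \tr (X *m (w *m adj w)).
Proof. by rewrite mulmxA mxtrace_mulC mulmxA /mxtrace big_ord1. Qed.

Lemma unitary_sum_qform_col n (V : 'M[C]_n) (X : 'M[C]_n) : unitary V ->
  \sum_j qform X (col j V) = \tr X.
Proof.
move=> uV; under eq_bigr => j _ do rewrite qform_mxtrace.
by rewrite -raddf_sum -mulmx_sumr unitary_sum_col_outer // mulmx1.
Qed.

Lemma replacement_kraus n (V : 'M[C]_n) (X : 'M[C]_n) : unitary V ->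
  \sum_i \sum_j ((col i V *m adj (col j V)) *m X *m adj (col i V *m adj (col j V)))
  = (\tr X)%:M.
Proof.
move=> uV.
have term i j : (col i V *m adj (col j V)) *m X *m adj (col i V *m adj (col j V)) =
    qform X (col j V) *: (col i V *m adj (col i V)).
  rewrite adjM adjK !mulmxA -(mulmxA (col i V)) -(mulmxA (col i V)).
  by rewrite (mx11_scalar (adj (col j V) *m X *m col j V)) mul_mx_scalar -scalemxAl.
under eq_bigr => i _ do rewrite (eq_bigr _ (fun j _ => term i j)) -scaler_suml.
by rewrite unitary_sum_qform_col // -scaler_sumr unitary_sum_col_outer // scalemx1.
Qed.

Section Control.
Variables (dA dB : nat) (V : 'M[C]_dA) (U : 'I_dA -> 'M[C]_dB).
Hypothesis uV : unitary V.

Definition ctrl : 'M[C]_(dA * dB) := \sum_j (col j V *m adj (col j V)) *t U j.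

Lemma ctrl_conj (G : 'M[C]_dB) :
  adj ctrl *m (1%:M *t G) *m ctrl =
  \sum_j (col j V *m adj (col j V)) *t (adj (U j) *m G *m U j).
Proof.
rewrite /ctrl [adj _]raddf_sum !mulmx_suml; apply: eq_bigr => j _ /=.
have term l : adj ((col j V *m adj (col j V)) *t U j) *m (1%:M *t G) *m
    ((col l V *m adj (col l V)) *t U l) =
    ((j == l)%:R *: (col j V *m adj (col l V))) *t (adj (U j) *m G *m U l).
  by rewrite adj_tens !tensmx_mul mulmx1 adjM adjK unitary_col_outer_mul.
rewrite mulmx_sumr (bigD1 j) //= big1 ?addr0 => [|l lj].
  by rewrite term eqxx scale1r.
by rewrite term eq_sym (negPf lj) scale0r tens0mx.
Qed.

Lemma ctrl_isometry : (forall j, unitary (U j)) -> adj ctrl *m ctrl = 1%:M.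
Proof.
move=> uU; have := ctrl_conj 1%:M; rewrite tensmx11 mulmx1 => ->.
under eq_bigr => j _ do rewrite mulmx1 (proj2 (uU j)).
by rewrite -tensmx_suml unitary_sum_col_outer // tensmx11.
Qed.

End Control.
End ControlledUnitary.

Section Inequalities.
Variable R : realType.
Local Notation C := R[i].
Local Open Scope complex_scope.

(* Operator Cauchy-Schwarz: the gap is half the psd sum
   [\sum_(j, l) (Y j - Y l) X (Y j - Y l)^dagger]. *)
Lemma loewner_conj_sum p m n (Y : 'I_p -> 'M[C]_(m, n)) (X : 'M[C]_n) : psd X ->
  loewner ((\sum_j Y j) *m X *m adj (\sum_j Y j))
          (p%:R *: \sum_j (Y j *m X *m adj (Y j))).
Proof.
move=> pX.
set T := \sum_j (Y j *m X *m adj (Y j)); set S := \sum_j Y j.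
have expand j l : (Y j - Y l) *m X *m adj (Y j - Y l) =
    Y j *m X *m adj (Y j) + Y l *m X *m adj (Y l)
    - (Y l *m X *m adj (Y j) + Y j *m X *m adj (Y l)).
  by rewrite raddfB mulmxBr !mulmxBl opprB addrACA opprD.
have cross : \sum_j \sum_l (Y j *m X *m adj (Y l)) = S *m X *m adj S.
  rewrite /S raddf_sum !mulmx_suml; apply: eq_bigr => j _.
  by rewrite mulmx_sumr.
have diag : \sum_j \sum_(l < p) (Y j *m X *m adj (Y j)) = p%:R *: T.
  rewrite scaler_sumr; apply: eq_bigr => j _.
  by rewrite sumr_const card_ord scaler_nat.
have gap : \sum_j \sum_l ((Y j - Y l) *m X *m adj (Y j - Y l)) =
    2%:R *: (p%:R *: T - S *m X *m adj S).
  under eq_bigr => j _ do rewrite (eq_bigr _ (fun l _ => expand j l)) sumrB !big_split.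
  rewrite sumrB !big_split /= [X in _ + X - _]exchange_big [X in _ - (X + _)]exchange_big.
  by rewrite /= cross !diag (scaler_nat 2) mulr2n addrACA opprD.
have pgap : psd (\sum_j \sum_l ((Y j - Y l) *m X *m adj (Y j - Y l))).
  by apply: psd_sum => j; apply: psd_sum => l; apply: psd_conj.
rewrite /loewner; have -> : p%:R *: T - S *m X *m adj S =
    2%:R^-1 *: \sum_j \sum_l ((Y j - Y l) *m X *m adj (Y j - Y l)).
  by rewrite gap scalerA mulVf ?scale1r // pnatr_eq0.
by apply: psdZ => //; rewrite invr_ge0 ler0n.
Qed.

(* Bessel's inequality: [c^-1 \sum_j u j u j^dagger] is an orthogonal projection P,
   and [tr J - tr (P J) = tr ((1 - P) J (1 - P))] is nonnegative. *)
Lemma bessel m p (J : 'M[C]_m) (u : 'I_p -> 'cV[C]_m) (c : C) :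
  psd J -> c != 0 -> c^* = c ->
  (forall i j, adj (u i) *m u j = (c * (i == j)%:R)%:M) ->
  c^-1 * \sum_j qform J (u j) <= \tr J.
Proof.
move=> pJ c0 cr hu.
set P := c^-1 *: \sum_j (u j *m adj (u j)).
have adjP : adj P = P.
  rewrite /P adjZ raddf_sum; congr (_ *: _).
    by apply: (etrans (conjc_inv c)); rewrite cr.
  by apply: eq_bigr => j _ /=; rewrite adjM adjK.
have PP : P *m P = P.
  rewrite /P -scalemxAl -scalemxAr scalerA mulmx_suml.
  under eq_bigr => i _ do rewrite mulmx_sumr.
  rewrite (eq_bigr (fun i => c *: (u i *m adj (u i)))); last first.
    move=> i _; rewrite (bigD1 i) //= big1 ?addr0 => [|j ji].
      by rewrite mulmxA -(mulmxA (u i)) hu eqxx mulr1 mul_mx_scalar -scalemxAl.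
    by rewrite mulmxA -(mulmxA (u i)) hu eq_sym (negPf ji) mulr0 mul_mx_scalar
      scale0r mul0mx.
  by rewrite -scaler_sumr scalerA -mulrA mulVf // mulr1.
set Q := 1%:M - P.
have QQ : adj Q *m Q = Q.
  by rewrite /Q [adj _]raddfB /= adj1 adjP mulmxBl !mulmxBr !mul1mx mulmx1 PP subrr subr0.
have trQ : \tr (Q *m J *m adj Q) = \tr J - \tr (P *m J).
  by rewrite mxtrace_mulC mulmxA QQ /Q mulmxBl mul1mx raddfB.
have trP : \tr (P *m J) = c^-1 * \sum_j qform J (u j).
  rewrite /P -scalemxAl mxtraceZ mulmx_suml raddf_sum; congr (_ * _).
  by apply: eq_bigr => j _ /=; rewrite -mulmxA mxtrace_mulC /mxtrace big_ord1.
by rewrite -subr_ge0 -trP -trQ; apply/psd_mxtrace_ge0/psd_conj.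
Qed.

End Inequalities.

Section LowerBound.
Variable R : realType.
Local Notation C := R[i].

Definition twirl dA dB (U : 'I_dA -> 'M[C]_dB) (Y : 'M[C]_dB) : 'M[C]_dB :=
  dA%:R^-1 *: \sum_l (U l *m Y *m adj (U l)).

Lemma twirl_channel dA dB (U : 'I_dA -> 'M[C]_dB) :
  (0 < dA)%N -> (forall j, unitary (U j)) -> channel (twirl U).
Proof.
move=> dA_gt0 uU; split; first split.
- move=> a X Y; rewrite /twirl scalerA mulrC -scalerA -scalerDr; congr (_ *: _).
  rewrite scaler_sumr -big_split; apply: eq_bigr => l _ /=.
  by rewrite mulmxDr mulmxDl -scalemxAr -scalemxAl.
- move=> k X pX; rewrite maptens_scaler maptens_sumr.
  apply: psdZ; first by rewrite invr_ge0 ler0n.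
  by apply: psd_sum => l; rewrite maptens_id_conj; apply: psd_conj.
- move=> X; rewrite /twirl mxtraceZ raddf_sum.
  under eq_bigr => l _ do rewrite /= mxtrace_mulC mulmxA (proj2 (uU l)) mul1mx.
  by rewrite sumr_const card_ord -[\tr X *+ _]mulr_natl mulKf // pnatr_eq0 -lt0n.
Qed.

Section Twirl.
Variables (dA dB : nat) (V : 'M[C]_dA) (U : 'I_dA -> 'M[C]_dB).
Hypotheses (dA_gt0 : (0 < dA)%N) (uV : unitary V).

Definition twirl_kraus (l i j : 'I_dA) : 'M[C]_(dA * dB) :=
  (col i V *m adj (col j V)) *t U l.

Lemma replacement_twirl_kraus (Z : 'M[C]_(dA * dB)) :
  dA%:R *: maptens (@Rone R dA dA) (twirl U) Z =
  \sum_l \sum_i \sum_j (twirl_kraus l i j *m Z *m adj (twirl_kraus l i j)).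
Proof.
under eq_bigr => l _ do under eq_bigr => i _ do
  under eq_bigr => j _ do rewrite tensmx_conj.
rewrite -maptens_scaler.
under eq_bigr => l _ do under eq_bigr => i _ do rewrite -maptens_suml.
under eq_bigr => l _ do rewrite -maptens_suml.
rewrite -maptens_sumr; apply: eq_maptens => Y.
  by rewrite replacement_kraus.
by rewrite scalerA mulfV ?scale1r // pnatr_eq0 -lt0n.
Qed.

Lemma ctrl_loewner_twirl k (rho : 'M[C]_(k * (dA * dB))) : psd rho ->
  loewner (maptens (@idmap R k) (fun X => ctrl V U *m X *m adj (ctrl V U)) rho)
     (dA%:R ^+ 2 *: maptens (@idmap R k) (maptens (@Rone R dA dA) (twirl U)) rho).
Proof.
move=> prho.
pose T l i j := (1%:M *t twirl_kraus l i j) *m rho *m adj (1%:M *t twirl_kraus l i j).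
have psdT l i j : psd (T l i j) by apply: psd_conj.
have lhs : maptens (@idmap R k) (fun X => ctrl V U *m X *m adj (ctrl V U)) rho =
    (\sum_j (1%:M *t twirl_kraus j j j)) *m rho *m
    adj (\sum_j (1%:M *t twirl_kraus j j j)).
  by rewrite maptens_id_conj -tensmx_sumr.
have rhs : dA%:R *: maptens (@idmap R k) (maptens (@Rone R dA dA) (twirl U)) rho =
    \sum_l \sum_i \sum_j T l i j.
  rewrite -maptens_scaler (eq_maptens rho (frefl _) replacement_twirl_kraus).
  rewrite maptens_sumr; apply: eq_bigr => l _; rewrite maptens_sumr.
  apply: eq_bigr => i _; rewrite maptens_sumr.
  by apply: eq_bigr => j _; rewrite maptens_id_conj.
rewrite lhs; apply: (loewner_trans (loewner_conj_sum _ prho)).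
rewrite expr2 -scalerA rhs; apply: loewnerZ; first by rewrite ler0n.
apply: loewner_sum => l.
apply: (loewner_trans (loewner_bigD1 l (psdT l l))).
by apply: loewner_bigD1 => i; apply: psd_sum.
Qed.

End Twirl.
End LowerBound.

Section MaximallyEntangled.
Variable R : realType.
Local Notation C := R[i].

(* [omega n] is the unnormalised maximally entangled vector [|1>>]; the
   vectorisation [|A>>] of the paper is [(1%:M *t A) *m omega n]. *)
Definition omega n : 'cV[C]_(n * n) := \sum_p delta_mx (mxtens_index (p, p)) 0.

Lemma qform_omega n (M : 'M[C]_(n * n)) :
  qform M (omega n) = \sum_r \sum_s M (mxtens_index (r, r)) (mxtens_index (s, s)).
Proof.
rewrite /qform /omega [adj _]raddf_sum !mulmx_suml summxE; apply: eq_bigr => r _ /=.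
rewrite mulmx_sumr summxE; apply: eq_bigr => s _.
by rewrite adj_delta -rowE -colE !mxE.
Qed.

Lemma qform_omega_tens n (A B : 'M[C]_n) :
  qform (A *t B) (omega n) = \sum_r \sum_s A r s * B r s.
Proof.
by rewrite qform_omega; apply: eq_bigr => r _; apply: eq_bigr => s _; rewrite tensmxE.
Qed.

Lemma omega_inner n (A B : 'M[C]_n) :
  adj ((1%:M *t A) *m omega n) *m ((1%:M *t B) *m omega n) = (\tr (adj A *m B))%:M.
Proof.
rewrite [LHS]mx11_scalar; congr (_%:M).
rewrite adjM !mulmxA -(mulmxA _ (adj _)) adj_tens adj1 tensmx_mul mul1mx.
rewrite -/(qform _ (omega n)) qform_omega_tens; apply: eq_bigr => r _.
by under eq_bigr => s _ do rewrite mxE; rewrite sum_natr_eq_mul.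
Qed.

Lemma omega_norm n : adj (omega n) *m omega n = n%:R%:M.
Proof.
have := omega_inner (1%:M : 'M[C]_n) 1%:M.
by rewrite tensmx11 !mul1mx adj1 mulmx1 mxtrace1.
Qed.

Lemma omega_outer n : omega n *m adj (omega n) =
  \sum_p \sum_q ((delta_mx p q : 'M[C]_n) *t delta_mx p q).
Proof.
rewrite /omega [adj _]raddf_sum mulmx_suml; apply: eq_bigr => p _ /=.
rewrite mulmx_sumr; apply: eq_bigr => q _.
by rewrite adj_delta mul_delta_mx tensmx_delta.
Qed.

Lemma qform_delta_omega n (p q : 'I_n) (Z : 'M[C]_n) :
  qform (delta_mx p q *t Z) (omega n) = Z p q.
Proof.
rewrite qform_omega_tens.
under eq_bigr => r _ do under eq_bigr => s _ do
  rewrite mxE -mulnb natrM -mulrA eq_sym [s == q]eq_sym.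
by under eq_bigr => r _ do rewrite -mulr_sumr sum_natr_eq_mul; rewrite sum_natr_eq_mul.
Qed.

(* [maptens idmap M (omega n *m adj (omega n))] is the Choi matrix of [M]. *)
Lemma qform_choi n (M : 'M[C]_n -> 'M[C]_n) (W : 'M[C]_n) :
  qform (maptens (@idmap R n) M (omega n *m adj (omega n))) ((1%:M *t W) *m omega n) =
  \sum_p \sum_q (adj W *m M (delta_mx p q) *m W) p q.
Proof.
rewrite qform_mulmx omega_outer maptens_delta mulmx_sumr mulmx_suml qform_sum.
apply: eq_bigr => p _; rewrite mulmx_sumr mulmx_suml qform_sum; apply: eq_bigr => q _.
by rewrite adj_tens adj1 !tensmx_mul mul1mx mulmx1 qform_delta_omega.
Qed.

Lemma maxent_state n : (0 < n)%N ->
  state (n%:R^-1 *: (omega n *m adj (omega n) : 'M[C]_(n * n))).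
Proof.
move=> n_gt0; split; first by apply: psdZ; [rewrite invr_ge0 ler0n | apply: psd_outer].
rewrite mxtraceZ mxtrace_mulC omega_norm mxtrace_scalar mulr1n mulVf //.
by rewrite pnatr_eq0 -lt0n.
Qed.

End MaximallyEntangled.

Arguments omega {R} n.

Section UpperBound.
Variable R : realType.
Local Notation C := R[i].
Local Open Scope complex_scope.

Lemma choi_psd n (Q : 'M[C]_n -> 'M[C]_n) : channel Q ->
  psd (maptens (@idmap R n) Q (omega n *m adj (omega n))).
Proof. by case=> -[_ cp] _; apply/cp/psd_outer. Qed.

Lemma choi_mxtrace n (Q : 'M[C]_n -> 'M[C]_n) : channel Q ->
  \tr (maptens (@idmap R n) Q (omega n *m adj (omega n))) = n%:R.
Proof.
case=> _ tp; rewrite omega_outer maptens_delta raddf_sum.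
rewrite (eq_bigr (fun _ => 1)) ?sumr_const ?card_ord // => p _.
rewrite raddf_sum (eq_bigr (fun q => (p == q)%:R * (p == q)%:R)).
  by rewrite sum_natr_eq_mul eqxx.
by move=> q _ /=; rewrite mxtrace_tens tp mxtrace_delta.
Qed.

Lemma sqr_natr_le (a b : nat) (l : R) (S : C) : (0 < a)%N -> (0 < b)%N ->
  0 <= S -> S <= b%:R ^+ 2 -> (a * b)%:R ^+ 2 <= l%:C * S -> a%:R ^+ 2 <= l.
Proof.
move=> a_gt0 b_gt0 S_ge0 S_le h.
have b2_gt0 : (0 : C) < b%:R ^+ 2 by rewrite exprn_gt0 // ltr0n.
have [l_ge0|l_lt0] := lerP 0 l.
  rewrite -lecR rmorphXn rmorph_nat -(ler_pM2r b2_gt0) -exprMn -natrM.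
  by apply: (le_trans h); rewrite ler_wpM2l // ler0c.
have lS : l%:C * S <= 0 by rewrite mulr_le0_ge0 // (lecR l 0) ltW.
have ab_gt0 : (0 : C) < (a * b)%:R ^+ 2 by rewrite exprn_gt0 // ltr0n muln_gt0 a_gt0.
by have := lt_le_trans ab_gt0 (le_trans h lS); rewrite ltxx.
Qed.

Section Control.
Variables (dA dB : nat) (V : 'M[C]_dA) (U : 'I_dA -> 'M[C]_dB).
Hypotheses (dA_gt0 : (0 < dA)%N) (dB_gt0 : (0 < dB)%N).
Hypotheses (uV : unitary V) (uU : forall j, unitary (U j)).

Lemma qform_choi_ctrl_conj :
  qform (maptens (@idmap R (dA * dB)) (fun X => ctrl V U *m X *m adj (ctrl V U))
           (omega (dA * dB) *m adj (omega (dA * dB))))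
        ((1%:M *t ctrl V U) *m omega (dA * dB)) = (dA * dB)%:R ^+ 2.
Proof.
rewrite qform_choi.
under eq_bigr => p _ do under eq_bigr => q _ do
  rewrite !mulmxA ctrl_isometry // mul1mx -mulmxA ctrl_isometry // mulmx1 mxE !eqxx.
by rewrite /= !sumr_const !card_ord -mulrnA mulnn natrX.
Qed.

Lemma ctrl_rone_entry (Q : 'M[C]_dB -> 'M[C]_dB) a1 b1 a2 b2 : linmap Q ->
  (adj (ctrl V U) *m maptens (@Rone R dA dA) Q
     (delta_mx (mxtens_index (a1, b1)) (mxtens_index (a2, b2))) *m ctrl V U)
    (mxtens_index (a1, b1)) (mxtens_index (a2, b2)) =
  (a1 == a2)%:R * \sum_j (col j V *m adj (col j V)) a1 a2 *
                         (adj (U j) *m Q (delta_mx b1 b2) *m U j) b1 b2.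
Proof.
move=> lQ; rewrite -tensmx_delta (maptens_tensmx _ _ (@Rone_linear _ _ _) lQ).
rewrite /Rone mxtrace_delta.
rewrite -scalemx1 tensmxZl -scalemxAr -scalemxAl ctrl_conj // mxE summxE.
by congr (_ * _); apply: eq_bigr => j _; rewrite tensmxE.
Qed.

Lemma choi_ctrl_rone (Q : 'M[C]_dB -> 'M[C]_dB) : linmap Q ->
  \sum_p \sum_q
    (adj (ctrl V U) *m maptens (@Rone R dA dA) Q (delta_mx p q) *m ctrl V U) p q
  = \sum_j \sum_b1 \sum_b2 (adj (U j) *m Q (delta_mx b1 b2) *m U j) b1 b2.
Proof.
move=> lQ; rewrite big_mxtens_index.
under eq_bigr => a1 _ do under eq_bigr => b1 _ do
  rewrite big_mxtens_index exchange_big /=.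
under eq_bigr => a1 _ do under eq_bigr => b1 _ do under eq_bigr => b2 _ do
  rewrite (eq_bigr _ (fun a2 _ => ctrl_rone_entry a1 b1 a2 b2 lQ)) sum_natr_eq_mul.
under eq_bigr => a1 _ do under eq_bigr => b1 _ do rewrite exchange_big.
under eq_bigr => a1 _ do rewrite exchange_big.
rewrite exchange_big; apply: eq_bigr => j _.
rewrite -[RHS]mul1r -(unitary_col_outer_mxtrace j uV) mulr_suml.
apply: eq_bigr => a1 _; rewrite mulr_sumr; apply: eq_bigr => b1 _.
by rewrite mulr_sumr.
Qed.

Hypothesis orth : forall i j, i != j -> \tr (adj (U i) *m U j) = 0.

Lemma vec_unitary_inner i j :
  adj ((1%:M *t U i) *m omega dB) *m ((1%:M *t U j) *m omega dB) =
  (dB%:R * (i == j)%:R)%:M.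
Proof.
rewrite omega_inner; case: eqVneq => [->|ij]; last by rewrite orth // mulr0.
by rewrite (proj2 (uU j)) mxtrace1 mulr1.
Qed.

Lemma sum_qform_choi_le (Q : 'M[C]_dB -> 'M[C]_dB) : channel Q ->
  \sum_j qform (maptens (@idmap R dB) Q (omega dB *m adj (omega dB)))
               ((1%:M *t U j) *m omega dB) <= dB%:R ^+ 2.
Proof.
move=> cQ; have dB_pos : (0 : C) < dB%:R by rewrite ltr0n.
have := bessel (choi_psd cQ) (lt0r_neq0 dB_pos) (rmorph_nat _ _) vec_unitary_inner.
by rewrite choi_mxtrace // ler_pdivrMl // expr2.
Qed.

Lemma qform_choi_ctrl_rone (Q : 'M[C]_dB -> 'M[C]_dB) : linmap Q ->
  qform (maptens (@idmap R (dA * dB)) (maptens (@Rone R dA dA) Q)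
           (omega (dA * dB) *m adj (omega (dA * dB))))
        ((1%:M *t ctrl V U) *m omega (dA * dB)) =
  \sum_j qform (maptens (@idmap R dB) Q (omega dB *m adj (omega dB)))
               ((1%:M *t U j) *m omega dB).
Proof.
move=> lQ; rewrite qform_choi choi_ctrl_rone //.
by apply: eq_bigr => j _; rewrite qform_choi.
Qed.

Lemma ctrl_rone_loewner_ge (Q : 'M[C]_dB -> 'M[C]_dB) (l : R) : channel Q ->
  let Phi := (dA * dB)%:R^-1 *: (omega (dA * dB) *m adj (omega (dA * dB))) in
  loewner (maptens (@idmap R (dA * dB)) (fun X => ctrl V U *m X *m adj (ctrl V U)) Phi)
          (l%:C *: maptens (@idmap R (dA * dB)) (maptens (@Rone R dA dA) Q) Phi) ->
  dA%:R ^+ 2 <= l.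
Proof.
move=> cQ Phi le_Phi; have lQ : linmap Q by case: cQ => -[].
have := loewner_qform ((1%:M *t ctrl V U) *m omega (dA * dB)) le_Phi.
rewrite /Phi !(linmapZ _ _ (maptens_linear _ (conj_linear _))).
rewrite !(linmapZ _ _ (maptens_linear _ (maptens_linear _ lQ))) !qformZ.
rewrite qform_choi_ctrl_conj // qform_choi_ctrl_rone //.
rewrite [X in _ <= X]mulrCA ler_pM2l; last first.
  by rewrite invr_gt0 ltr0n muln_gt0 dA_gt0.
apply: sqr_natr_le => //; last exact: sum_qform_choi_le.
by rewrite sumr_ge0 // => j _; apply: choi_psd.
Qed.

End Control.
End UpperBound.

Section Divergence.
Variable R : realType.
Local Notation C := R[i].
Local Open Scope complex_scope.
Local Open Scope classical_set_scope.

Lemma log2_le_sqr_natr (x : R) (a : nat) : (0 < a)%N ->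
  x <= a%:R ^+ 2 -> log2 x <= 2 * log2 a%:R.
Proof.
move=> a_gt0 x_le; rewrite /log2 mulrA ler_wpM2r ?invr_ge0 ?ln_ge0 ?ler1n //.
have a_pos : (0 : R) < a%:R by rewrite ltr0n.
have [x_le1|x_gt1] := lerP x 1.
  by apply: le_trans (ln_le0 x_le1) _; rewrite mulr_ge0 // ln_ge0 // ler1n.
rewrite -[2]/(2%:R) mulr_natl -lnXn // ler_ln // posrE ?exprn_gt0 //.
exact: lt_trans x_gt1.
Qed.

Lemma sqr_natr_le_log2 (x : R) (a : nat) : (0 < a)%N ->
  a%:R ^+ 2 <= x -> 2 * log2 a%:R <= log2 x.
Proof.
move=> a_gt0 x_ge; rewrite /log2 mulrA ler_wpM2r ?invr_ge0 ?ln_ge0 ?ler1n //.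
have a2_pos : (0 : R) < a%:R ^+ 2 by rewrite exprn_gt0 // ltr0n.
rewrite -[2]/(2%:R) mulr_natl -lnXn ?ltr0n // ler_ln // posrE //.
exact: lt_le_trans x_ge.
Qed.

Lemma Dmax_le_of_loewner n (X Y : 'M[C]_n) (a : nat) : (0 < a)%N ->
  loewner X ((a%:R ^+ 2 : R)%:C *: Y) -> (Dmax X Y <= (2 * log2 a%:R)%:E)%E.
Proof.
move=> a_gt0 le_XY; rewrite /Dmax.
set S := [set l : R | loewner X (l%:C *: Y)].
have Sa : S (a%:R ^+ 2) by [].
rewrite asboolT; last by exists (a%:R ^+ 2).
rewrite lee_fin log2_le_sqr_natr //.
have [lbS|nlbS] := pselect (has_lbound S); first exact: ge_inf.
by rewrite inf_out ?exprn_ge0 ?ler0n // => -[].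
Qed.

Lemma Dmax_ge_of_loewner n (X Y : 'M[C]_n) (a : nat) : (0 < a)%N ->
  (forall l : R, loewner X (l%:C *: Y) -> a%:R ^+ 2 <= l) ->
  ((2 * log2 a%:R)%:E <= Dmax X Y)%E.
Proof.
move=> a_gt0 h; rewrite /Dmax.
case: (boolP `[< _ >]) => [/asboolP S_neq0|_]; last exact: leey.
by rewrite lee_fin sqr_natr_le_log2 // lb_le_inf.
Qed.

Section Control.
Variables (dA dB : nat) (V : 'M[C]_dA) (U : 'I_dA -> 'M[C]_dB).
Hypotheses (dA_gt0 : (0 < dA)%N) (uV : unitary V) (uU : forall j, unitary (U j)).

Let ctrl_chan (X : 'M[C]_(dA * dB)) := ctrl V U *m X *m adj (ctrl V U).

Lemma Sminch_ctrl_ge : (- (2 * log2 dA%:R)%:E <= Sminch ctrl_chan)%E.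
Proof.
rewrite /Sminch leeN2; apply: (@le_trans _ _ (Dmaxch ctrl_chan
    (maptens (@Rone R dA dA) (twirl U)))).
  by apply: ereal_inf_lbound; exists (twirl U); split => //; apply: twirl_channel.
apply: ge_ereal_sup => _ [k [rho [st ->]]]; apply: Dmax_le_of_loewner => //.
by rewrite rmorphXn rmorph_nat; apply: ctrl_loewner_twirl => //; case: st.
Qed.

Lemma Sminch_ctrl_le : (0 < dB)%N ->
  (forall i j, i != j -> \tr (adj (U i) *m U j) = 0) ->
  (Sminch ctrl_chan <= - (2 * log2 dA%:R)%:E)%E.
Proof.
move=> dB_gt0 orth; rewrite /Sminch leeN2; apply/ereal_infP => _ [Q [cQ ->]].
have := Dmax_ge_of_loewner dA_gt0
  (fun l => ctrl_rone_loewner_ge (l := l) dA_gt0 dB_gt0 uV uU orth cQ).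
move/le_trans; apply; apply: ereal_sup_ubound.
exists (dA * dB)%N, ((dA * dB)%:R^-1 *: (omega (dA * dB) *m adj (omega (dA * dB)))).
by split=> //; apply: maxent_state; rewrite muln_gt0 dA_gt0.
Qed.

End Control.
End Divergence.

Theorem proposition14 (R : realType) (dA dB : nat) (hA : (0 < dA)%N)
  (hB : (0 < dB)%N) (V : 'M[R[i]]_dA) (U : 'I_dA -> 'M[R[i]]_dB) :
  unitary V -> (forall j, unitary (U j)) ->
  let CU := \sum_(j < dA) ((col j V *m adj (col j V)) *t U j) in
  let CUchan := fun X : 'M[R[i]]_(dA * dB) => CU *m X *m adj CU in
  ((- (2 * log2 dA%:R)%:E <= Sminch CUchan)%E /\
   ((forall i j : 'I_dA, i != j -> \tr (adj (U i) *m U j) = 0) ->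
      Sminch CUchan = (- (2 * log2 dA%:R)%:E)%E)).
Proof.
move=> uV uU CU CUchan.
have lower := Sminch_ctrl_ge hA uV uU.
split=> [//|orth]; apply/le_anti/andP; split=> //.
exact: Sminch_ctrl_le.
Qed.
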